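(* Let a natural gas network be given by a connected directed graph with node set $\{1,\dots,N\}$ and edge set $\{1,\dots,E\}$ (no self-loops, no parallel edges), with node-edge incidence matrix $A\in\mathbb{R}^{N\times E}$, and let $B\in\mathbb{R}^{N\times E}$, $\gamma_{1}\in\mathbb{R}^{E}$, $\gamma_{2}\in\mathbb{R}^{E\times N}$, $\gamma_{3}\in\mathbb{R}^{E\times E}$, $\delta\in\mathbb{R}^{N}$ be given. Fix a reference node $\mathrm{r}$ and a value $\mathring{\pi}_{\mathrm{r}}\in\mathbb{R}$. Define $\hat{\gamma}_{2}=A\gamma_{2}$, $\hat{\gamma}_{3}=B+A\gamma_{3}$, assume that the matrix $\hat{\gamma}_{2\backslash\mathrm{r}}$ obtained from $\hat{\gamma}_{2}$ by deleting its $\mathrm{r}$-th row and column is invertible, let $\breve{\gamma}_{2}\in\mathbb{R}^{N\times N}$ have zero $\mathrm{r}$-th row and column and remaining entries equal to those of $\hat{\gamma}_{2\backslash\mathrm{r}}^{-1}$, and set $\grave{\gamma}_{2}=\gamma_{2}\breve{\gamma}_{2}$, $\grave{\gamma}_{3}=\gamma_{2}\breve{\gamma}_{2}\hat{\gamma}_{3}-\gamma_{3}$. For $\vartheta\in\mathbb{R}^{N}$, $\kappa\in\mathbb{R}^{E}$, $\varphi\in\mathbb{R}^{E}$, $\pi\in\mathbb{R}^{N}$, $\alpha\in\mathbb{R}^{N\times N}$, $\beta\in\mathbb{R}^{E\times N}$, define the network response model, for $\xi\in\mathbb{R}^{N}$, $$\tilde{\vartheta}(\xi)=\vartheta+\alpha\xi,\quad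 \tilde{\kappa}(\xi)=\kappa+\beta\xi,\quad \tilde{\pi}(\xi)=\pi+\breve{\gamma}_{2}(\alpha-\hat{\gamma}_{3}\beta-I_{N})\xi,\quad \tilde{\varphi}(\xi)=\varphi+\big(\grave{\gamma}_{2}(\alpha-I_{N})-\grave{\gamma}_{3}\beta\big)\xi,$$ and $\tilde{\delta}(\xi)=\delta+\xi$. Suppose that $$A\varphi=\vartheta-B\kappa-\delta,\qquad (\alpha-B\beta)^{\top}\mathbb{1}=\mathbb{1},\qquad \varphi=\gamma_{1}+\gamma_{2}\pi+\gamma_{3}\kappa,\qquad \pi_{\mathrm{r}}=\mathring{\pi}_{\mathrm{r}},\ [\alpha]_{\mathrm{r}}=\mathbb{0}^{\top},\ [\beta]_{\mathrm{r}}=\mathbb{0}^{\top}.$$ Then the model is admissible, i.e., for every $\xi\in\mathbb{R}^{N}$, $$A\tilde{\varphi}(\xi)=\tilde{\vartheta}(\xi)-B\tilde{\kappa}(\xi)-\tilde{\delta}(\xi),\qquad \tilde{\varphi}(\xi)=\gamma_{1}+\gamma_{2}\tilde{\pi}(\xi)+\gamma_{3}\tilde{\kappa}(\xi),\qquad \tilde{\pi}_{\mathrm{r}}(\xi)=\mathring{\pi}_{\mathrm{r}}.$$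
   Context: The node-edge incidence matrix is defined by: for each edge $\ell=(n,n')$ directed from sending node $n$ to receiving node $n'$, $A_{n\ell}=+1$, $A_{n'\ell}=-1$, and $A_{k\ell}=0$ otherwise. $\mathbb{1}$ and $\mathbb{0}$ denote all-ones and all-zeros vectors of appropriate dimension, $I_N$ the identity matrix, and $[M]_{\mathrm{r}}$ the $\mathrm{r}$-th row of a matrix $M$. $\vartheta$ are gas injections, $\kappa$ pressure regulation rates, $\varphi$ flow rates, $\pi$ squared pressures, $\alpha,\beta$ recourse (policy) matrices, $\delta$ mean extractions and $\xi$ the extraction forecast error. The equation $\varphi=\gamma_{1}+\gamma_{2}\pi+\gamma_{3}\kappa$ is a linearized Weymouth equation with given coefficients $\gamma_1,\gamma_2,\gamma_3$. *)

From HB Require Import structures.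
From mathcomp Require Import all_boot all_order all_algebra.
Set Implicit Arguments. Unset Strict Implicit. Unset Printing Implicit Defensive.
Import Order.TTheory GRing.Theory Num.Theory.
Local Open Scope ring_scope.

Definition no_self_loops (N E : nat) (src dst : 'I_E -> 'I_N) : Prop :=
  forall e, src e != dst e.

Definition no_parallel_edges (N E : nat) (src dst : 'I_E -> 'I_N) : Prop :=
  forall e e', src e = src e' -> dst e = dst e' -> e = e'.

Definition adj (N E : nat) (src dst : 'I_E -> 'I_N) : rel 'I_N :=
  fun n m => [exists e, ((src e == n) && (dst e == m)) || ((src e == m) && (dst e == n))].

Definition connected_graph (N E : nat) (src dst : 'I_E -> 'I_N) : Prop :=
  forall n m, connect (adj src dst) n m.

Definition incidence (R : ringType) (N E : nat) (src dst : 'I_E -> 'I_N) : 'M[R]_(N, E) :=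
  \matrix_(n, l) (if n == src l then 1 else if n == dst l then -1 else 0).

Definition g2hat (R : ringType) (N E : nat) (A : 'M[R]_(N, E)) (g2 : 'M[R]_(E, N)) : 'M[R]_N :=
  A *m g2.

Definition g3hat (R : ringType) (N E : nat) (A B : 'M[R]_(N, E)) (g3 : 'M[R]_E) : 'M[R]_(N, E) :=
  B + A *m g3.

Definition del_rc (R : Type) (N : nat) (r : 'I_N) (M : 'M[R]_N) : 'M[R]_(N.-1) :=
  row' r (col' r M).

Definition g2breve (R : comUnitRingType) (N : nat) (r : 'I_N) (G2hat : 'M[R]_N) : 'M[R]_N :=
  \matrix_(i, j)
    match unlift r i, unlift r j with
    | Some i', Some j' => invmx (del_rc r G2hat) i' j'
    | _, _ => 0
    end.

Definition ones (R : ringType) (n : nat) : 'cV[R]_n := const_mx 1.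

From HB Require Import structures.
From mathcomp Require Import all_boot all_order all_algebra.
Import Order.TTheory GRing.Theory Num.Theory.
Local Open Scope ring_scope.

(* The columns of the incidence matrix sum to zero, hence so do those of
   [hat g2 = A g2], and [hat g2 * breve g2 = I - e_r 1^T]. The condition
   [(al - B be)^T 1 = 1] makes the columns of [M = al - hat g3 be - I] sum to
   zero as well, so [hat g2 * breve g2] fixes [M]; this is exactly the flow
   balance of the perturbed state. The Weymouth relation is affine, so it
   transfers to the perturbation, and the reference pressure is unchanged
   because the [r]-th row of [breve g2] vanishes. *)

Lemma incidence_colsum0 (R : nzRingType) N E (src dst : 'I_E -> 'I_N) :
  no_self_loops src dst -> (ones R N)^T *m incidence R src dst = 0.
Proof.
move=> noloop; apply/rowP => l; rewrite /ones !mxE.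
rewrite (bigD1 (src l)) //= (bigD1 (dst l)) /=; last by rewrite eq_sym noloop.
rewrite big1 ?addr0 => [|n /andP[nsrc ndst]]; last first.
  by rewrite !mxE (negbTE nsrc) (negbTE ndst) mulr0.
by rewrite !mxE eqxx eq_sym (negbTE (noloop l)) eqxx !mul1r subrr.
Qed.

Section G2breve.

Variables (R : comUnitRingType) (N : nat) (r : 'I_N) (G : 'M[R]_N).

Lemma g2breve_mul_row_r K (M : 'M[R]_(N, K)) j : (g2breve r G *m M) r j = 0.
Proof. by rewrite mxE big1 // => k _; rewrite mxE unlift_none mul0r. Qed.

Hypothesis G_colsum0 : (ones R N)^T *m G = 0.
Hypothesis G_del_unit : del_rc r G \in unitmx.

Lemma colsum0_row_r k : G r k = - \sum_(i < N.-1) G (lift r i) k.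
Proof.
apply/eqP; rewrite -addr_eq0.
have /rowP/(_ k) := G_colsum0; rewrite /ones !mxE (bigD1_ord r) //= => /eqP.
by under eq_bigr do rewrite !mxE mul1r; rewrite !mxE mul1r.
Qed.

Lemma mul_g2breve : G *m g2breve r G = 1%:M - delta_mx r 0 *m (ones R N)^T.
Proof.
have GDV := mulmxV G_del_unit.
apply/matrixP => i j; rewrite !mxE big_ord1 !mxE (bigD1_ord r) //= !mxE.
rewrite unlift_none mulr0 add0r mulr1.
case: (unliftP r j) => [j'|] -> /=; last first.
  rewrite big1 => [|k _]; last by rewrite !mxE unlift_none; case: unlift; rewrite mulr0.
  by rewrite eqxx; case: eqP; rewrite ?subrr ?subr0.
rewrite eqxx andbT.
under eq_bigr do rewrite mxE !liftK.
case: (unliftP r i) => [i'|] ->.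
  rewrite (inj_eq (@lift_inj _ r)) [lift r i' == r]eq_sym (negbTE (neq_lift r i')) subr0.
  have /matrixP/(_ i' j') := GDV; rewrite !mxE => <-.
  by apply: eq_bigr => k _; rewrite !mxE.
rewrite eqxx (negbTE (neq_lift r j')) sub0r.
under eq_bigr do rewrite colsum0_row_r mulNr mulr_suml.
rewrite sumrN; congr (- _).
transitivity (((ones R N.-1)^T *m del_rc r G *m invmx (del_rc r G)) 0 j').
  rewrite mxE; apply: eq_bigr => k _; rewrite -mulr_suml !mxE; congr (_ * _).
  by apply: eq_bigr => l _; rewrite /ones !mxE mul1r.
by rewrite -mulmxA GDV mulmx1 /ones !mxE.
Qed.

Lemma mul_g2breveKr K (M : 'M[R]_(N, K)) :
  (ones R N)^T *m M = 0 -> G *m (g2breve r G *m M) = M.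
Proof.
by move=> M_colsum0; rewrite mulmxA mul_g2breve mulmxBl mul1mx -mulmxA M_colsum0 mulmx0 subr0.
Qed.

End G2breve.

Theorem lemma2 (R : realFieldType) (N E : nat)
  (src dst : 'I_E -> 'I_N)
  (Hloop : no_self_loops src dst)
  (Hpar : no_parallel_edges src dst)
  (Hconn : connected_graph src dst)
  (B : 'M[R]_(N, E)) (g1 : 'cV[R]_E) (g2 : 'M[R]_(E, N)) (g3 : 'M[R]_E)
  (delta : 'cV[R]_N) (r : 'I_N) (pi_r0 : R)
  (Hinv : del_rc r (g2hat (incidence R src dst) g2) \in unitmx)
  (vt : 'cV[R]_N) (ka : 'cV[R]_E) (ph : 'cV[R]_E) (pi : 'cV[R]_N)
  (al : 'M[R]_N) (be : 'M[R]_(E, N))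
  (H1 : incidence R src dst *m ph = vt - B *m ka - delta)
  (H2 : (al - B *m be)^T *m ones R N = ones R N)
  (H3 : ph = g1 + g2 *m pi + g3 *m ka)
  (H4 : pi r 0 = pi_r0)
  (H5 : forall j, al r j = 0)
  (H6 : forall (e : 'I_E), nat_of_ord e = nat_of_ord r -> forall j, be e j = 0) :
  let A := incidence R src dst in
  let G2h := g2hat A g2 in
  let G3h := g3hat A B g3 in
  let G2b := g2breve r G2h in
  let G2g := g2 *m G2b in
  let G3g := g2 *m G2b *m G3h - g3 in
  let vt_t := fun xi : 'cV[R]_N => vt + al *m xi in
  let ka_t := fun xi : 'cV[R]_N => ka + be *m xi in
  let pi_t := fun xi : 'cV[R]_N => pi + G2b *m (al - G3h *m be - 1%:M) *m xi in
  let ph_t := fun xi : 'cV[R]_N => ph + (G2g *m (al - 1%:M) - G3g *m be) *m xi in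
  let de_t := fun xi : 'cV[R]_N => delta + xi in
  forall xi : 'cV[R]_N,
    [/\ A *m ph_t xi = vt_t xi - B *m ka_t xi - de_t xi,
        ph_t xi = g1 + g2 *m pi_t xi + g3 *m ka_t xi
      & pi_t xi r 0 = pi_r0].
Proof.
move=> A G2h G3h G2b G2g G3g vt_t ka_t pi_t ph_t de_t xi.
have A_colsum0 : (ones R N)^T *m A = 0 by exact: incidence_colsum0.
have G2h_colsum0 : (ones R N)^T *m G2h = 0 by rewrite mulmxA A_colsum0 mul0mx.
set M := al - G3h *m be - 1%:M.
have M_split : M = (al - B *m be - 1%:M) - A *m g3 *m be.
  by rewrite /M /G3h /g3hat mulmxDl opprD addrA [LHS]addrAC.
have M_colsum0 : (ones R N)^T *m M = 0.
  have := congr1 trmx H2; rewrite trmx_mul trmxK => H2T.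
  rewrite M_split 2!mulmxBr H2T mulmx1 subrr sub0r.
  by rewrite !mulmxA A_colsum0 !mul0mx oppr0.
have ph_coef : G2g *m (al - 1%:M) - G3g *m be = g2 *m (G2b *m M) + g3 *m be.
  rewrite /M /G2g /G3g !mulmxBr !mulmxBl !mulmxA.
  by rewrite opprD opprK addrA (addrAC (g2 *m G2b *m al)).
have A_ph_coef : A *m (G2g *m (al - 1%:M) - G3g *m be) = al - B *m be - 1%:M.
  rewrite ph_coef mulmxDr mulmxA mul_g2breveKr //.
  by rewrite M_split mulmxA subrK.
split.
- rewrite /ph_t mulmxDr H1 mulmxA A_ph_coef /vt_t /ka_t /de_t.
  by rewrite !mulmxBl mul1mx mulmxDr mulmxA addrACA (addrACA vt) -!opprD.
- rewrite /ph_t ph_coef /pi_t /ka_t H3 mulmxDl (mulmxDr g2) (mulmxDr g3) !mulmxA.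
  by rewrite addrACA (addrA g1).
- by rewrite /pi_t mxE H4 -mulmxA g2breve_mul_row_r addr0.
Qed.
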